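(* Let $\mathsf{\Sigma}\in\mathbb{R}^{N\times N_S}$ and $\mathsf{\Lambda}\in\mathbb{R}^{N\times N_L}$ be the Star-to-RWG and Loop-to-RWG matrices of a triangular surface mesh, and let $\mathsf{\Sigma}_n=\mathsf{\Sigma}(\mathsf{\Sigma}^{\mathrm T}\mathsf{\Sigma})^+(\mathsf{\Sigma}^{\mathrm T}\mathsf{\Sigma})_n$ and $\mathsf{\Lambda}_n=\mathsf{\Lambda}(\mathsf{\Lambda}^{\mathrm T}\mathsf{\Lambda})^+(\mathsf{\Lambda}^{\mathrm T}\mathsf{\Lambda})_n$ be the filtered Star and Loop matrices (see context). Then for integers $1\le m<n<p<q\le N_S$, $$(\mathsf{\Sigma}_m-\mathsf{\Sigma}_n)^{\mathrm T}(\mathsf{\Sigma}_p-\mathsf{\Sigma}_q)=\mathsf{0},$$ and for integers $1\le m<n<p<q\le N_L$, $$(\mathsf{\Lambda}_m-\mathsf{\Lambda}_n)^{\mathrm T}(\mathsf{\Lambda}_p-\mathsf{\Lambda}_q)=\mathsf{0}.$$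
   Context: Consider a closed triangulated surface with $N$ edges, $N_S$ triangles and $N_L$ vertices. Each edge $m$ is shared by two triangles $c_m^+$, $c_m^-$. $[\mathsf{\Sigma}]_{mn}=1$ if cell $n$ is $c_m^+$, $-1$ if cell $n$ is $c_m^-$, $0$ otherwise. $[\mathsf{\Lambda}]_{mn}=\pm1$ when vertex $n$ is an endpoint of edge $m$ (opposite signs for the two endpoints, fixed by the orientation convention), $0$ otherwise. $^+$ denotes the Moore–Penrose pseudo-inverse. For $\mathsf{X}\in\{\mathsf{\Sigma},\mathsf{\Lambda}\}$ with $N_x$ columns, fix an SVD $\mathsf{X}=\mathsf{U}_X\mathsf{S}_X\mathsf{V}_X^{\mathrm T}$ with $\mathsf{V}_X$ orthogonal $N_x\times N_x$ and singular values $\sigma_{X,1}\ge\dots\ge\sigma_{X,N_x}\ge0$, so $\mathsf{X}^{\mathrm T}\mathsf{X}=\mathsf{V}_X\mathrm{diag}(\sigma_{X,i}^2)\mathsf{V}_X^{\mathrm T}$. For $1\le n\le N_x$, $\mathsf{L}_{X,n}$ is diagonal with $[\mathsf{L}_{X,n}]_{ii}=\sigma_{X,i}$ if $i>N_x-n$ and $0$ otherwise, and $(\mathsf{X}^{\mathrm T}\mathsf{X})_n=\mathsf{V}_X\mathsf{L}_{X,n}^2\mathsf{V}_X^{\mathrm T}$. *)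

From HB Require Import structures.
From mathcomp Require Import all_boot all_order all_algebra.
From mathcomp Require Import reals.
Set Implicit Arguments. Unset Strict Implicit. Unset Printing Implicit Defensive.
Import Order.TTheory GRing.Theory Num.Theory.
Local Open Scope ring_scope.

(* Combinatorial data of a triangulated surface with N edges (RWG functions),
   NS triangles (cells / stars) and NL vertices (loops).  Edge m is shared by
   the two triangles c_plus m, c_minus m, and has endpoints v_plus m, v_minus m
   (the orientation convention fixes which endpoint gets +1). *)
Record mesh (N NS NL : nat) := Mesh {
  c_plus : 'I_N -> 'I_NS;
  c_minus : 'I_N -> 'I_NS;
  v_plus : 'I_N -> 'I_NL;
  v_minus : 'I_N -> 'I_NL }.

Definition cell_edges N NS NL (M : mesh N NS NL) (c : 'I_NS) : {set 'I_N} :=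
  [set e | (c_plus M e == c) || (c_minus M e == c)].

Definition edge_verts N NS NL (M : mesh N NS NL) (e : 'I_N) : {set 'I_NL} :=
  [set v_plus M e; v_minus M e].

Definition closed_tri_surface N NS NL (M : mesh N NS NL) : Prop :=
  [/\ (forall e, c_plus M e != c_minus M e),
      (forall e, v_plus M e != v_minus M e),
      (forall e e', e != e' -> edge_verts M e != edge_verts M e'),
      (forall c, #|cell_edges M c| = 3%N /\
                 #|\bigcup_(e in cell_edges M c) edge_verts M e| = 3%N) &
      (forall v, exists e, v \in edge_verts M e)].

Definition StarMx (R : realType) N NS NL (M : mesh N NS NL) : 'M[R]_(N, NS) :=
  \matrix_(m < N, n < NS)
    (if n == c_plus M m then 1 else if n == c_minus M m then -1 else 0).

Definition LoopMx (R : realType) N NS NL (M : mesh N NS NL) : 'M[R]_(N, NL) :=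
  \matrix_(m < N, n < NL)
    (if n == v_plus M m then 1 else if n == v_minus M m then -1 else 0).

(* Moore-Penrose pseudo-inverse, characterised by the Penrose equations
   (which determine it uniquely). *)
Definition is_pinv (R : realType) k (A P : 'M[R]_k) : Prop :=
  [/\ A *m P *m A = A, P *m A *m P = P,
      (A *m P)^T = A *m P & (P *m A)^T = P *m A].

Definition is_svd (R : realType) N Nx (X : 'M[R]_(N, Nx))
    (V : 'M[R]_Nx) (sigma : 'I_Nx -> R) : Prop :=
  [/\ V^T *m V = 1%:M,
      (forall i j : 'I_Nx, (i <= j)%N -> sigma j <= sigma i),
      (forall i, 0 <= sigma i) &
      exists U : 'M[R]_N, U^T *m U = 1%:M /\
        X = U *m (\matrix_(i < N, j < Nx) (if (i : nat) == j then sigma j else 0))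
              *m V^T].

(* L_{X,n}: diagonal, [L]_ii = sigma_i if i > Nx - n (1-based i), else 0 *)
Definition Lmx (R : realType) Nx (sigma : 'I_Nx -> R) (n : nat) : 'M[R]_Nx :=
  diag_mx (\row_(i < Nx) (if (Nx - n < i.+1)%N then sigma i else 0)).

Definition gram_trunc (R : realType) Nx (V : 'M[R]_Nx) (sigma : 'I_Nx -> R)
    (n : nat) : 'M[R]_Nx :=
  V *m (Lmx sigma n *m Lmx sigma n) *m V^T.

(* filtered matrix X_n = X (X^T X)^+ (X^T X)_n, with P = (X^T X)^+ *)
Definition filtered (R : realType) N Nx (X : 'M[R]_(N, Nx)) (P : 'M[R]_Nx)
    (V : 'M[R]_Nx) (sigma : 'I_Nx -> R) (n : nat) : 'M[R]_(N, Nx) :=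
  X *m P *m gram_trunc V sigma n.

From HB Require Import structures.
From mathcomp Require Import all_boot all_order all_algebra.
From mathcomp Require Import reals.
From mathcomp Require Import zify.
Import Order.TTheory GRing.Theory Num.Theory.
Local Open Scope ring_scope.

(* Nothing about meshes is used: the statement holds for every matrix X with
   an SVD X = U S V^T.  In the eigenbasis V the Gram matrix X^T X becomes the
   diagonal S^T S, its pseudo-inverse becomes a diagonal Q, and the filter
   (X^T X)_n becomes the diagonal L_n^2.  Hence X_m - X_n = X V Q D V^T with
   D = L_m^2 - L_n^2 diagonal and supported on the singular indices of the
   band (N_x - n, N_x - m], so (X_m - X_n)^T (X_p - X_q) = V D Q D' V^T by
   Q S^T S Q = Q, and D D' = 0 because the bands of (m, n) and (p, q) are
   disjoint when n <= p. *)

Section EigenbasisFacts.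
Variable R : realType.

Lemma pinv_conj k (V A P : 'M[R]_k) :
  V *m V^T = 1%:M -> is_pinv A P -> is_pinv (V^T *m A *m V) (V^T *m P *m V).
Proof.
move=> VVt [APA PAP APsym PAsym].
have conjM B C : V^T *m B *m V *m (V^T *m C *m V) = V^T *m (B *m C) *m V.
  by rewrite !mulmxA -[V^T *m B *m V *m V^T]mulmxA VVt mulmx1.
have conjT B : (V^T *m B *m V)^T = V^T *m B^T *m V.
  by rewrite !trmx_mul trmxK mulmxA.
by split; rewrite ?conjM ?conjT ?APA ?PAP ?APsym ?PAsym.
Qed.

Lemma pinv_diag_mx k (d : 'rV[R]_k) (Q : 'M[R]_k) :
  is_pinv (diag_mx d) Q -> is_diag_mx Q.
Proof.
case=> EQE QEQ EQsym QEsym.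
have QdL : Q = diag_mx d *m (Q^T *m Q).
  by rewrite -{1}QEQ -QEsym trmx_mul tr_diag_mx mulmxA.
have QdR : Q = Q *m Q^T *m diag_mx d.
  by rewrite -{1}QEQ -mulmxA -EQsym trmx_mul tr_diag_mx mulmxA.
apply/is_diag_mxP => a b ab.
have dQd : d 0 a * Q a b * d 0 b = 0.
  move/matrixP/(_ a b): EQE.
  by rewrite mul_mx_diag mul_diag_mx !mxE -val_eqE (negPf ab).
have [da0|da] := eqVneq (d 0 a) 0; first by rewrite QdL mul_diag_mx mxE da0 mul0r.
have [db0|db] := eqVneq (d 0 b) 0; first by rewrite QdR mul_mx_diag mxE db0 mulr0.
by move/eqP: dQd; rewrite !mulf_eq0 (negPf da) (negPf db) orbF => /eqP.
Qed.

Lemma svd_gram_diag N Nx (X : 'M[R]_(N, Nx)) V sigma :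
  is_svd X V sigma -> is_diag_mx ((X *m V)^T *m (X *m V)).
Proof.
case=> VtV _ _ [U [UtU ->]].
rewrite -mulmxA VtV mulmx1 trmx_mul -mulmxA (mulmxA U^T) UtU mul1mx.
apply/is_diag_mxP => a b ab; rewrite !mxE big1 // => i _; rewrite !mxE.
by case: eqP => [?|]; case: eqP => [?|]; rewrite ?mul0r ?mulr0 //; lia.
Qed.

Lemma Lmx_sqr_band_orth Nx (sigma : 'I_Nx -> R) m n p q :
  (m <= n)%N -> (n <= p)%N -> (p <= q)%N ->
  (Lmx sigma m *m Lmx sigma m - Lmx sigma n *m Lmx sigma n)
    *m (Lmx sigma p *m Lmx sigma p - Lmx sigma q *m Lmx sigma q) = 0.
Proof.
move=> mn np pq; rewrite /Lmx !mulmx_diag -!raddfB /= mulmx_diag.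
apply/matrixP => i j; rewrite !mxE.
by do 4 case: ifP; rewrite ?subrr ?subr0 ?sub0r ?mulr0 ?mul0r ?mul0rn //; lia.
Qed.

End EigenbasisFacts.

Section FilteredBands.
Variables (R : realType) (N Nx : nat) (X : 'M[R]_(N, Nx)).
Variables (V : 'M[R]_Nx) (sigma : 'I_Nx -> R) (P : 'M[R]_Nx).
Hypotheses (svdX : is_svd X V sigma) (pinvP : is_pinv (X^T *m X) P).

Lemma filtered_sub_orth (D1 D2 : 'M[R]_Nx) :
  is_diag_mx D1 -> D1 *m D2 = 0 ->
  (X *m P *m (V *m D1 *m V^T))^T *m (X *m P *m (V *m D2 *m V^T)) = 0.
Proof.
move=> /diag_mxP[d1 ->] D12.
have VVt : V *m V^T = 1%:M by case: svdX => /mulmx1C.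
have [e Ee] : exists e, (X *m V)^T *m (X *m V) = diag_mx e.
  by apply/diag_mxP; exact: svd_gram_diag svdX.
have pinvQ : is_pinv (diag_mx e) (V^T *m P *m V).
  by rewrite -Ee trmx_mul !mulmxA -(mulmxA _ X^T); exact: pinv_conj.
have [q Qq] : exists q, V^T *m P *m V = diag_mx q.
  by apply/diag_mxP; exact: pinv_diag_mx pinvQ.
have QEQ : diag_mx q *m diag_mx e *m diag_mx q = diag_mx q.
  by rewrite -Qq; case: pinvQ.
have filtE D : X *m P *m (V *m D *m V^T) = X *m V *m (diag_mx q *m D) *m V^T.
  by rewrite -Qq !mulmxA -(mulmxA X V) VVt mulmx1.
have sandwich (Y : 'M[R]_(N, Nx)) A B :
    (Y *m A *m V^T)^T *m (Y *m B *m V^T) = V *m (A^T *m (Y^T *m Y) *m B) *m V^T.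
  by rewrite !trmx_mul trmxK !mulmxA.
rewrite !filtE sandwich Ee trmx_mul !tr_diag_mx.
rewrite [X in V *m X]mulmxA -(mulmxA (diag_mx d1) (diag_mx q)).
rewrite -(mulmxA (diag_mx d1)) QEQ.
by rewrite diag_mxC -(mulmxA (diag_mx q)) D12 !mulmx0 mul0mx.
Qed.

Lemma filtered_band_orth m n p q :
  (m <= n)%N -> (n <= p)%N -> (p <= q)%N ->
  (filtered X P V sigma m - filtered X P V sigma n)^T
    *m (filtered X P V sigma p - filtered X P V sigma q) = 0.
Proof.
move=> mn np pq.
have subE k l : filtered X P V sigma k - filtered X P V sigma l =
    X *m P *m (V *m (Lmx sigma k *m Lmx sigma k - Lmx sigma l *m Lmx sigma l) *m V^T).
  by rewrite /filtered /gram_trunc mulmxBr mulmxBl mulmxBr.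
rewrite !subE; apply: filtered_sub_orth; last exact: Lmx_sqr_band_orth.
by rewrite /Lmx !mulmx_diag -raddfB diag_mx_is_diag.
Qed.

End FilteredBands.

Theorem mainTheorem3 (R : realType) (N NS NL : nat) (M : mesh N NS NL)
  (HM : closed_tri_surface M)
  (VS : 'M[R]_NS) (sS : 'I_NS -> R) (PS : 'M[R]_NS)
  (VL : 'M[R]_NL) (sL : 'I_NL -> R) (PL : 'M[R]_NL) :
  is_svd (StarMx R M) VS sS ->
  is_pinv ((StarMx R M)^T *m StarMx R M) PS ->
  is_svd (LoopMx R M) VL sL ->
  is_pinv ((LoopMx R M)^T *m LoopMx R M) PL ->
  (forall m n p q : nat, (1 <= m)%N -> (m < n)%N -> (n < p)%N -> (p < q)%N ->
     (q <= NS)%N ->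
     (filtered (StarMx R M) PS VS sS m - filtered (StarMx R M) PS VS sS n)^T
       *m (filtered (StarMx R M) PS VS sS p - filtered (StarMx R M) PS VS sS q)
     = 0) /\
  (forall m n p q : nat, (1 <= m)%N -> (m < n)%N -> (n < p)%N -> (p < q)%N ->
     (q <= NL)%N ->
     (filtered (LoopMx R M) PL VL sL m - filtered (LoopMx R M) PL VL sL n)^T
       *m (filtered (LoopMx R M) PL VL sL p - filtered (LoopMx R M) PL VL sL q)
     = 0).
Proof.
move=> svdS pinvS svdL pinvL.
by split=> m n p q _ /ltnW mn /ltnW np /ltnW pq _; exact: filtered_band_orth.
Qed.
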